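(* Let $\Gamma$ be any cocompact lattice in the Lie group $\mathrm{Sol}^3$. Then $\Gamma$ is not presentable by a product.
   Context: $\mathrm{Sol}^3$ denotes the solvable Lie group $\mathbb{R}^2\rtimes\mathbb{R}$, where $t\in\mathbb{R}$ acts on $\mathbb{R}^2$ by the matrix $\mathrm{diag}(e^t,e^{-t})$ (the Thurston geometry $\mathrm{Sol}^3$). An infinite group $\Gamma$ is not presentable by a product if for every homomorphism $\varphi\colon \Gamma_1\times\Gamma_2\to\Gamma$ whose image has finite index in $\Gamma$, at least one of $\varphi(\Gamma_1)$, $\varphi(\Gamma_2)$ is finite. *)

From Stdlib Require Import Reals List.
Open Scope R_scope.

(** The Lie group Sol^3 = R^2 ⋊ R, t acting by diag(e^t, e^-t).
    An element (x, y, t) represents ((x,y), t). *)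
Definition Sol : Type := (R * R * R)%type.

Definition sol_mul (g h : Sol) : Sol :=
  let '(x, y, t) := g in
  let '(x', y', s) := h in
  (x + exp t * x', y + exp (- t) * y', t + s).

Definition sol_one : Sol := (0, 0, 0).

Definition sol_inv (g : Sol) : Sol :=
  let '(x, y, t) := g in (- (exp (- t) * x), - (exp t * y), - t).

(** Sup-norm distance on the underlying manifold R^3 (standard topology). *)
Definition sol_dist (g h : Sol) : R :=
  let '(x, y, t) := g in
  let '(x', y', s) := h in
  Rmax (Rabs (x - x')) (Rmax (Rabs (y - y')) (Rabs (t - s))).

Definition is_subgroup (G : Sol -> Prop) : Prop :=
  G sol_one /\
  (forall g h, G g -> G h -> G (sol_mul g h)) /\
  (forall g, G g -> G (sol_inv g)).

Definition is_discrete (G : Sol -> Prop) : Prop :=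
  forall g, G g -> exists eps, 0 < eps /\
    forall h, G h -> sol_dist g h < eps -> h = g.

(** Compact subset of Sol (≅ R^3): closed and bounded (Heine–Borel). *)
Definition sol_closed (K : Sol -> Prop) : Prop :=
  forall g, (forall eps, 0 < eps -> exists k, K k /\ sol_dist g k < eps) -> K g.
Definition sol_bounded (K : Sol -> Prop) : Prop :=
  exists M, forall k, K k -> sol_dist sol_one k <= M.
Definition sol_compact (K : Sol -> Prop) : Prop := sol_closed K /\ sol_bounded K.

(** Cocompact: Sol / G is compact, i.e. Sol = K·G for some compact K. *)
Definition is_cocompact (G : Sol -> Prop) : Prop :=
  exists K, sol_compact K /\ forall g, exists k gam, K k /\ G gam /\ g = sol_mul k gam.

Definition cocompact_lattice (G : Sol -> Prop) : Prop :=
  is_subgroup G /\ is_discrete G /\ is_cocompact G.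

Record Group : Type := {
  gcar :> Type;
  gmul : gcar -> gcar -> gcar;
  gone : gcar;
  ginv : gcar -> gcar;
  gassoc : forall a b c, gmul a (gmul b c) = gmul (gmul a b) c;
  gone_l : forall a, gmul gone a = a;
  ginv_l : forall a, gmul (ginv a) a = gone
}.

Definition sol_finite (A : Sol -> Prop) : Prop :=
  exists l : list Sol, forall g, A g -> In g l.

Definition prod_hom (G1 G2 : Group) (Gam : Sol -> Prop) (phi : G1 * G2 -> Sol) : Prop :=
  (forall p, Gam (phi p)) /\
  forall a b a' b',
    phi (gmul G1 a a', gmul G2 b b') = sol_mul (phi (a, b)) (phi (a', b')).

(** The image of phi has finite index in Gamma: finitely many left cosets cover Gamma. *)
Definition image_finite_index (G1 G2 : Group) (Gam : Sol -> Prop) (phi : G1 * G2 -> Sol) : Prop :=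
  exists reps : list Sol, (forall r, In r reps -> Gam r) /\
    forall gam, Gam gam -> exists r p, In r reps /\ gam = sol_mul r (phi p).

Definition not_presentable_by_product (Gam : Sol -> Prop) : Prop :=
  ~ sol_finite Gam /\
  forall (G1 G2 : Group) (phi : G1 * G2 -> Sol),
    prod_hom G1 G2 Gam phi ->
    image_finite_index G1 G2 Gam phi ->
    sol_finite (fun g => exists a : G1, g = phi (a, gone G2)) \/
    sol_finite (fun g => exists b : G2, g = phi (gone G1, b)).

(** The first coordinate of Sol^3 is acted on affinely: [g] sends [u] to
    [x g + e^(t g) u].  If [Γ] is covered by finitely many translates
    [r · φ(G1) φ(G2)], the two images commute elementwise.  An element with
    [t ≠ 0] acts as a homothety with a unique fixed point, and everything
    commuting with it fixes that point (or is trivial, if its own [t] vanishes).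
    So if both images were nontrivial, all of [φ(G1) φ(G2)] would either fix a
    common point or lie in [{t = 0}]; in both cases a real-valued function
    ([g ↦ g·u], resp. [t]) would be right-invariant under the cover, hence
    bounded on [Γ] by its finitely many values on the representatives.  But
    cocompactness makes both functions unbounded on [Γ]. *)

From Stdlib Require Import Reals List Lra Classical.
Open Scope R_scope.

Lemma Rabs_le_between (x a : R) : Rabs x <= a -> - a <= x <= a.
Proof. unfold Rabs; destruct (Rcase_abs x); lra. Qed.

Lemma exp_le_compat (a b : R) : a <= b -> exp a <= exp b.
Proof. intros [Hlt | ->]; [apply Rlt_le, exp_increasing, Hlt | apply Rle_refl]. Qed.

Lemma one_minus_exp_neq0 (t : R) : t <> 0 -> 1 - exp t <> 0.
Proof. intros Ht E; apply Ht, exp_inv; rewrite exp_0; lra. Qed.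

Lemma list_Rabs_bounded {A : Type} (f : A -> R) (l : list A) :
  exists S, forall r, In r l -> Rabs (f r) <= S.
Proof.
  induction l as [|a l [S HS]].
  - exists 0; intros r [].
  - exists (Rmax (Rabs (f a)) S); intros r [<- | Hr].
    + apply Rmax_l.
    + eapply Rle_trans; [apply HS, Hr | apply Rmax_r].
Qed.

Lemma gmul_one_r (G : Group) (a : G) : gmul G a (gone G) = a.
Proof.
  assert (Hr : gmul G a (ginv G a) = gone G).
  { set (b := ginv G a).
    rewrite <- (gone_l G (gmul G a b)), <- (ginv_l G b) at 1.
    rewrite <- gassoc, (gassoc G b a b); unfold b at 2.
    rewrite ginv_l, gone_l; apply ginv_l. }
  rewrite <- (ginv_l G a), gassoc, Hr; apply gone_l.
Qed.

Definition sol_x (g : Sol) : R := fst (fst g).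
Definition sol_t (g : Sol) : R := snd g.

Definition sol_xact (g : Sol) (u : R) : R := sol_x g + exp (sol_t g) * u.

Definition sol_xfix (g : Sol) : R := sol_x g / (1 - exp (sol_t g)).

Lemma sol_mul_one (g : Sol) : sol_mul g sol_one = g.
Proof. destruct g as [[x y] t]; unfold sol_mul, sol_one; f_equal; [f_equal|]; ring. Qed.

Lemma sol_t_mul (g h : Sol) : sol_t (sol_mul g h) = sol_t g + sol_t h.
Proof. destruct g as [[? ?] ?], h as [[? ?] ?]; reflexivity. Qed.

Lemma sol_xact_mul (g h : Sol) (u : R) :
  sol_xact (sol_mul g h) u = sol_xact g (sol_xact h u).
Proof.
  destruct g as [[x y] t], h as [[x' y'] s]; unfold sol_xact, sol_x, sol_t; simpl.
  rewrite exp_plus; ring.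
Qed.

Lemma sol_xact_xfix (g : Sol) : sol_t g <> 0 -> sol_xact g (sol_xfix g) = sol_xfix g.
Proof.
  intros Ht; pose proof (one_minus_exp_neq0 _ Ht).
  unfold sol_xact, sol_xfix; field; assumption.
Qed.

Lemma sol_xfix_unique (g : Sol) (u : R) :
  sol_t g <> 0 -> sol_xact g u = u -> u = sol_xfix g.
Proof.
  unfold sol_xact, sol_xfix; intros Ht Hu; pose proof (one_minus_exp_neq0 _ Ht).
  field_simplify_eq; [lra | assumption].
Qed.

Lemma commute_fixes_xfix (a l : Sol) :
  sol_mul a l = sol_mul l a -> sol_t a <> 0 -> sol_xact l (sol_xfix a) = sol_xfix a.
Proof.
  intros E Ha; apply sol_xfix_unique; [exact Ha|].
  rewrite <- sol_xact_mul, E, sol_xact_mul, sol_xact_xfix by exact Ha; reflexivity.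
Qed.

Lemma commute_sol_t0_trivial (a l : Sol) :
  sol_mul a l = sol_mul l a -> sol_t a <> 0 -> sol_t l = 0 -> l = sol_one.
Proof.
  destruct a as [[xa ya] ta], l as [[x y] t]; unfold sol_t; simpl; intros E Ha ->.
  injection E; intros _ Ey Ex; rewrite exp_0 in Ex; rewrite Ropp_0, exp_0 in Ey.
  pose proof (one_minus_exp_neq0 ta Ha).
  pose proof (one_minus_exp_neq0 (- ta) ltac:(lra)).
  assert (x = 0) by (apply (Rmult_eq_reg_l (1 - exp ta)); [nra | assumption]).
  assert (y = 0) by (apply (Rmult_eq_reg_l (1 - exp (- ta))); [nra | assumption]).
  subst; reflexivity.
Qed.

Lemma sol_dist_one_bounds (k : Sol) (M : R) :
  sol_dist sol_one k <= M -> Rabs (sol_x k) <= M /\ Rabs (sol_t k) <= M.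
Proof.
  destruct k as [[x y] t]; unfold sol_dist, sol_one, sol_x, sol_t; simpl; intros HM.
  rewrite <- (Rabs_Ropp x), <- (Rabs_Ropp t).
  replace (- x) with (0 - x) by ring; replace (- t) with (0 - t) by ring.
  split; eapply Rle_trans; try exact HM; [apply Rmax_l|].
  eapply Rle_trans; [|apply Rmax_r]; apply Rmax_r.
Qed.

Lemma cocompact_sol_t_unbounded (Gam : Sol -> Prop) :
  is_cocompact Gam -> forall T, exists gam, Gam gam /\ T < Rabs (sol_t gam).
Proof.
  intros (K & (_ & M & HM) & Hcov) T.
  destruct (Hcov (0, 0, T + M + 1)) as (k & gam & Hk & Hgam & E).
  exists gam; split; [exact Hgam|].
  apply (f_equal sol_t) in E; rewrite sol_t_mul in E; unfold sol_t at 1 in E; simpl in E.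
  destruct (sol_dist_one_bounds k M (HM k Hk)) as [_ Ht%Rabs_le_between].
  pose proof (Rle_abs (sol_t gam)); lra.
Qed.

Lemma cocompact_orbit_unbounded (Gam : Sol -> Prop) (u : R) :
  is_cocompact Gam -> forall T, exists gam, Gam gam /\ T < Rabs (sol_xact gam u).
Proof.
  intros (K & (_ & M & HM) & Hcov) T.
  set (X := M + exp M * Rabs T + Rabs u + 1).
  destruct (Hcov (X, 0, 0)) as (k & gam & Hk & Hgam & E).
  exists gam; split; [exact Hgam|].
  apply (f_equal (fun g => sol_xact g u)) in E; rewrite sol_xact_mul in E.
  unfold sol_xact at 1 in E; unfold sol_x, sol_t in E; simpl in E; rewrite exp_0 in E.
  set (v := sol_xact gam u) in *.
  destruct (sol_dist_one_bounds k M (HM k Hk)) as [Hx%Rabs_le_between Ht%Rabs_le_between].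
  destruct (Rlt_le_dec T (Rabs v)) as [Hlt | Hle]; [exact Hlt | exfalso].
  assert (Hkv : Rabs (exp (sol_t k) * v) <= exp M * Rabs T).
  { rewrite Rabs_mult, Rabs_pos_eq by (left; apply exp_pos).
    apply Rmult_le_compat; [left; apply exp_pos | apply Rabs_pos | |].
    - apply exp_le_compat; lra.
    - eapply Rle_trans; [exact Hle | apply Rle_abs]. }
  unfold sol_xact in E; apply Rabs_le_between in Hkv.
  pose proof (Rle_abs (- u)); rewrite Rabs_Ropp in *; unfold X in E; lra.
Qed.

Definition covered_by (Gam L : Sol -> Prop) (reps : list Sol) : Prop :=
  forall gam, Gam gam -> exists r l, In r reps /\ L l /\ gam = sol_mul r l.

Lemma covered_by_sub (Gam L L' : Sol -> Prop) (reps : list Sol) :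
  (forall l, L l -> L' l) -> covered_by Gam L reps -> covered_by Gam L' reps.
Proof.
  intros HLL' Hcov gam Hgam.
  destruct (Hcov gam Hgam) as (r & l & Hr & Hl & E).
  exists r, l; auto.
Qed.

Lemma unbounded_not_covered (Gam L : Sol -> Prop) (f : Sol -> R) (reps : list Sol) :
  (forall T, exists gam, Gam gam /\ T < Rabs (f gam)) ->
  (forall r l, L l -> f (sol_mul r l) = f r) ->
  ~ covered_by Gam L reps.
Proof.
  intros Hunb Hinv Hcov.
  destruct (list_Rabs_bounded f reps) as [S HS].
  destruct (Hunb S) as (gam & Hgam & HSlt).
  destruct (Hcov gam Hgam) as (r & l & Hr & Hl & ->).
  rewrite Hinv in HSlt by exact Hl; specialize (HS r Hr); lra.
Qed.

Lemma cocompact_not_covered_sol_t0 (Gam : Sol -> Prop) (reps : list Sol) :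
  is_cocompact Gam -> ~ covered_by Gam (fun l => sol_t l = 0) reps.
Proof.
  intros Hcc; apply unbounded_not_covered with sol_t.
  - exact (cocompact_sol_t_unbounded Gam Hcc).
  - intros r l Hl; rewrite sol_t_mul, Hl; ring.
Qed.

Lemma cocompact_not_covered_stabilizer (Gam : Sol -> Prop) (reps : list Sol) (u : R) :
  is_cocompact Gam -> ~ covered_by Gam (fun l => sol_xact l u = u) reps.
Proof.
  intros Hcc; apply unbounded_not_covered with (fun g => sol_xact g u).
  - exact (cocompact_orbit_unbounded Gam u Hcc).
  - intros r l Hl; rewrite sol_xact_mul, Hl; reflexivity.
Qed.

Definition set_mul (A B : Sol -> Prop) (g : Sol) : Prop :=
  exists a b, A a /\ B b /\ g = sol_mul a b.

Definition commute_sets (A B : Sol -> Prop) : Prop :=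
  forall a b, A a -> B b -> sol_mul a b = sol_mul b a.

Lemma set_mul_comm (A B : Sol -> Prop) (g : Sol) :
  commute_sets A B -> set_mul A B g -> set_mul B A g.
Proof. intros Hcomm (a & b & Ha & Hb & ->); exists b, a; auto. Qed.

Section CommutingCover.
Variables (Gam : Sol -> Prop) (reps : list Sol).
Hypothesis Hcc : is_cocompact Gam.

Lemma commuting_cover_factor_trivial (A B : Sol -> Prop) (a0 : Sol) :
  covered_by Gam (set_mul A B) reps -> commute_sets A B ->
  A a0 -> sol_t a0 <> 0 -> forall b, B b -> b = sol_one.
Proof.
  intros Hcov Hcomm Ha0 Hta0 b0 Hb0; apply NNPP; intros Hne.
  assert (Htb0 : sol_t b0 <> 0)
    by (intros Z; apply Hne, (commute_sol_t0_trivial a0); auto).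
  set (u := sol_xfix a0).
  assert (HB : forall b, B b -> sol_xact b u = u)
    by (intros b Hb; apply commute_fixes_xfix; auto).
  assert (Hu : u = sol_xfix b0) by (apply sol_xfix_unique; auto).
  assert (HA : forall a, A a -> sol_xact a u = u).
  { intros a Ha; rewrite Hu; apply commute_fixes_xfix; [symmetry; auto | exact Htb0]. }
  apply (cocompact_not_covered_stabilizer Gam reps u Hcc).
  eapply covered_by_sub; [|exact Hcov].
  intros g (a & b & Ha & Hb & ->); rewrite sol_xact_mul, HB, HA; auto.
Qed.

Lemma commuting_cover_one_factor_trivial (A B : Sol -> Prop) :
  covered_by Gam (set_mul A B) reps -> commute_sets A B ->
  (forall a, A a -> a = sol_one) \/ (forall b, B b -> b = sol_one).
Proof.
  intros Hcov Hcomm.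
  destruct (classic (exists a0, A a0 /\ sol_t a0 <> 0)) as [(a0 & Ha0 & Ht) | HA].
  { right; exact (commuting_cover_factor_trivial A B a0 Hcov Hcomm Ha0 Ht). }
  destruct (classic (exists b0, B b0 /\ sol_t b0 <> 0)) as [(b0 & Hb0 & Ht) | HB].
  { left; apply (commuting_cover_factor_trivial B A b0); auto.
    - eapply covered_by_sub; [intros g; apply set_mul_comm, Hcomm | exact Hcov].
    - intros b a Hb Ha; symmetry; auto. }
  exfalso; apply (cocompact_not_covered_sol_t0 Gam reps Hcc).
  eapply covered_by_sub; [|exact Hcov].
  intros g (a & b & Ha & Hb & ->); rewrite sol_t_mul.
  assert (sol_t a = 0) by (apply NNPP; intros Hne; apply HA; eauto).
  assert (sol_t b = 0) by (apply NNPP; intros Hne; apply HB; eauto).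
  lra.
Qed.

End CommutingCover.

Section ProductHomomorphism.
Variables (G1 G2 : Group) (phi : G1 * G2 -> Sol).
Hypothesis phi_mul : forall a b a' b',
  phi (gmul G1 a a', gmul G2 b b') = sol_mul (phi (a, b)) (phi (a', b')).

Definition left_image (g : Sol) : Prop := exists a : G1, g = phi (a, gone G2).
Definition right_image (g : Sol) : Prop := exists b : G2, g = phi (gone G1, b).

Lemma prod_hom_split (a : G1) (b : G2) :
  phi (a, b) = sol_mul (phi (a, gone G2)) (phi (gone G1, b)).
Proof. rewrite <- phi_mul, gmul_one_r, gone_l; reflexivity. Qed.

Lemma prod_hom_images_commute : commute_sets left_image right_image.
Proof. intros x y [a ->] [b ->]; rewrite <- !phi_mul, !gmul_one_r, !gone_l; reflexivity. Qed.

Lemma prod_hom_cover (Gam : Sol -> Prop) (reps : list Sol) :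
  (forall gam, Gam gam -> exists r p, In r reps /\ gam = sol_mul r (phi p)) ->
  covered_by Gam (set_mul left_image right_image) reps.
Proof.
  intros Hfi gam Hgam; destruct (Hfi gam Hgam) as (r & [a b] & Hr & ->).
  exists r, (phi (a, b)); repeat split; [exact Hr|].
  exists (phi (a, gone G2)), (phi (gone G1, b)).
  repeat split; [exists a | exists b | apply prod_hom_split]; reflexivity.
Qed.

End ProductHomomorphism.

Lemma sol_finite_trivial (A : Sol -> Prop) :
  (forall g, A g -> g = sol_one) -> sol_finite A.
Proof. intros HA; exists (sol_one :: nil); intros g Hg; left; symmetry; auto. Qed.

Theorem corollary3p7 (Gam : Sol -> Prop) :
  cocompact_lattice Gam -> not_presentable_by_product Gam.
Proof.
  intros (_ & _ & Hcc); split.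
  - intros [l Hl]; apply (cocompact_not_covered_sol_t0 Gam l Hcc).
    intros gam Hgam; exists gam, sol_one.
    split; [exact (Hl gam Hgam) | split; [reflexivity | symmetry; apply sol_mul_one]].
  - intros G1 G2 phi [_ phi_mul] [reps [_ Hfi]].
    destruct (commuting_cover_one_factor_trivial Gam reps Hcc
                (left_image G1 G2 phi) (right_image G1 G2 phi))
      as [Htriv | Htriv].
    + exact (prod_hom_cover G1 G2 phi phi_mul Gam reps Hfi).
    + exact (prod_hom_images_commute G1 G2 phi phi_mul).
    + left; exact (sol_finite_trivial _ Htriv).
    + right; exact (sol_finite_trivial _ Htriv).
Qed.
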